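(* Let $G$ be the lattice $\mathbb Z$ (neighbours $x\pm1$), unweighted, with $\mu\equiv1$, so $\Delta u(x)=u(x+1)-2u(x)+u(x-1)$ and $L=-\Delta$. Then for every $v:\mathbb Z\to\mathbb R$ and $x\in\mathbb Z$, $$\Delta\Psi_{\Upsilon'}(v)(x)\ge2e^{-Lv(x)/2}\,\Upsilon(Lv(x))+\Theta(v)(x),\qquad \Theta(v)(x):=\sum_{y\in\{x-1,x+1\}}e^{v(y)-v(x)}\big(e^{-Lv(y)}-1+Lv(x)\big).$$ Moreover, if $Lv(x)\ge1$, then $\Theta(v)(x)\ge2e^{-Lv(x)/2}(Lv(x)-1)$.
   Context: $\Psi_H(v)(x)=\sum_{y\in\{x-1,x+1\}}H(v(y)-v(x))$; $\Upsilon(z)=e^z-1-z$, $\Upsilon'(z)=e^z-1$. *)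

From Stdlib Require Import Reals ZArith.
Open Scope R_scope.

Definition Upsilon (z : R) : R := exp z - 1 - z.
Definition Upsilon' (z : R) : R := exp z - 1.

Definition LapZ (u : Z -> R) (x : Z) : R :=
  u (x + 1)%Z - 2 * u x + u (x - 1)%Z.
Definition Lop (u : Z -> R) (x : Z) : R := - LapZ u x.

Definition Psi (H : R -> R) (v : Z -> R) (x : Z) : R :=
  H (v (x - 1)%Z - v x) + H (v (x + 1)%Z - v x).

Definition Theta (v : Z -> R) (x : Z) : R :=
  exp (v (x - 1)%Z - v x) * (exp (- Lop v (x - 1)%Z) - 1 + Lop v x)
  + exp (v (x + 1)%Z - v x) * (exp (- Lop v (x + 1)%Z) - 1 + Lop v x).

(* Write a := e^{v(x-1)-v(x)}, b := e^{v(x+1)-v(x)} and l := Lv(x), so that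
   a b = e^{-l} and hence 2 e^{-l/2} <= a + b by AM-GM.  Both sides reduce to
   the same "outer" terms C + D (the neighbours' own exponential weights):
   Delta Psi_{Upsilon'}(v)(x) = C + D + (e^l - 2)(a + b) and
   Theta(v)(x) = C + D + (l - 1)(a + b).  Their difference is Upsilon(l)(a + b),
   and Upsilon >= 0; for l >= 1 the second bound follows from C + D > 0. *)
From Stdlib Require Import Reals ZArith Lra.
Open Scope R_scope.

Lemma Upsilon_ge0 (z : R) : 0 <= Upsilon z.
Proof. unfold Upsilon. pose proof (exp_ineq1_le z). lra. Qed.

Lemma exp_midpoint_le (s t : R) : 2 * exp ((s + t) / 2) <= exp s + exp t.
Proof.
  assert (Hsq : exp s + exp t - 2 * exp ((s + t) / 2)
                = (exp (s / 2) - exp (t / 2)) ^ 2).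
  { replace s with (s / 2 + s / 2) at 1 by field.
    replace t with (t / 2 + t / 2) at 1 by field.
    replace ((s + t) / 2) with (s / 2 + t / 2) by field.
    rewrite !exp_plus. ring. }
  pose proof (pow2_ge_0 (exp (s / 2) - exp (t / 2))). lra.
Qed.

Lemma Psi_exp_ge (v : Z -> R) (x : Z) :
  2 * exp (- Lop v x / 2) <= Psi exp v x.
Proof.
  unfold Psi.
  replace (- Lop v x) with ((v (x - 1)%Z - v x) + (v (x + 1)%Z - v x))
    by (unfold Lop, LapZ; ring).
  apply exp_midpoint_le.
Qed.

Lemma exp_shift_left (v : Z -> R) (x : Z) :
  exp (v (x - 1)%Z - v x) * exp (- Lop v (x - 1)%Z)
  = exp (v (x - 1 - 1)%Z - v (x - 1)%Z).
Proof.
  rewrite <- exp_plus. f_equal. unfold Lop, LapZ.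
  replace (x - 1 + 1)%Z with x by ring. ring.
Qed.

Lemma exp_shift_right (v : Z -> R) (x : Z) :
  exp (v (x + 1)%Z - v x) * exp (- Lop v (x + 1)%Z)
  = exp (v (x + 1 + 1)%Z - v (x + 1)%Z).
Proof.
  rewrite <- exp_plus. f_equal. unfold Lop, LapZ.
  replace (x + 1 - 1)%Z with x by ring. ring.
Qed.

Definition outer_weights (v : Z -> R) (x : Z) : R :=
  exp (v (x - 1 - 1)%Z - v (x - 1)%Z) + exp (v (x + 1 + 1)%Z - v (x + 1)%Z).

Lemma outer_weights_pos (v : Z -> R) (x : Z) : 0 < outer_weights v x.
Proof.
  unfold outer_weights.
  pose proof (exp_pos (v (x - 1 - 1)%Z - v (x - 1)%Z)).
  pose proof (exp_pos (v (x + 1 + 1)%Z - v (x + 1)%Z)). lra.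
Qed.

Lemma Theta_eq (v : Z -> R) (x : Z) :
  Theta v x = outer_weights v x + (Lop v x - 1) * Psi exp v x.
Proof.
  unfold outer_weights, Psi.
  rewrite <- exp_shift_left, <- exp_shift_right.
  unfold Theta. ring.
Qed.

Lemma LapZ_Psi_Upsilon'_eq (v : Z -> R) (x : Z) :
  LapZ (Psi Upsilon' v) x
  = outer_weights v x + (exp (Lop v x) - 2) * Psi exp v x.
Proof.
  unfold LapZ, Psi, Upsilon', outer_weights.
  replace (x + 1 - 1)%Z with x by ring.
  replace (x - 1 + 1)%Z with x by ring.
  (* the backward differences at x +- 1 are the forward ones at x rescaled by e^{Lv(x)} *)
  replace (exp (v x - v (x + 1)%Z))
    with (exp (Lop v x) * exp (v (x - 1)%Z - v x))
    by (rewrite <- exp_plus; f_equal; unfold Lop, LapZ; ring).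
  replace (exp (v x - v (x - 1)%Z))
    with (exp (Lop v x) * exp (v (x + 1)%Z - v x))
    by (rewrite <- exp_plus; f_equal; unfold Lop, LapZ; ring).
  ring.
Qed.

Theorem lemma5p5 :
  forall (v : Z -> R) (x : Z),
    LapZ (Psi Upsilon' v) x >=
      2 * exp (- Lop v x / 2) * Upsilon (Lop v x) + Theta v x
    /\ (Lop v x >= 1 ->
        Theta v x >= 2 * exp (- Lop v x / 2) * (Lop v x - 1)).
Proof.
  intros v x.
  pose proof (Psi_exp_ge v x) as Hamgm.
  pose proof (outer_weights_pos v x) as Houter.
  rewrite LapZ_Psi_Upsilon'_eq, Theta_eq.
  split.
  - pose proof (Rmult_le_compat_l _ _ _ (Upsilon_ge0 (Lop v x)) Hamgm).
    unfold Upsilon in *. nra.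
  - intros Hl.
    assert (0 <= Lop v x - 1) as Hl1 by lra.
    pose proof (Rmult_le_compat_l _ _ _ Hl1 Hamgm). nra.
Qed.
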